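(* Let $0<\mu\leq L$ and $c\geq 0$, and let $I=\left(0, \tfrac{2\mu}{\mu L+c^2}\right)$. Define $u:I\to\mathbb{R}$ by $$ u(t)=\tfrac{1}{2}\left(L^2+\mu^2+2c^2\right)t^2-(L+\mu)t +\tfrac{1}{2}(L-\mu)t\sqrt{(Lt + \mu t - 2)^2 + 4c^2t^2}. $$ Then $u$ is convex on $I$ and $u(I)\subseteq [-1, 0)$. *)

From Stdlib Require Import Reals.
Open Scope R_scope.

(* We require
   I to be an interval in the statement, so all convex combinations lie in I;
   we still restrict to points of I for generality. *)
Definition convex_on (I : R -> Prop) (f : R -> R) : Prop :=
  forall x y lam, I x -> I y -> 0 <= lam <= 1 ->
    f (lam * x + (1 - lam) * y) <= lam * f x + (1 - lam) * f y.

Definition u_fun (mu L c : R) (t : R) : R :=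
  / 2 * (L ^ 2 + mu ^ 2 + 2 * c ^ 2) * t ^ 2 - (L + mu) * t
  + / 2 * (L - mu) * t * sqrt ((L * t + mu * t - 2) ^ 2 + 4 * c ^ 2 * t ^ 2).

Definition I_int (mu L c : R) (t : R) : Prop :=
  0 < t < 2 * mu / (mu * L + c ^ 2).

(** With [A = [[L, c], [-c, mu]]], the Gram matrix [M = (I - tA)^T (I - tA)] has
    entries [M11 = (1 - tL)^2 + c^2 t^2], [M22 = (1 - t mu)^2 + c^2 t^2] and
    [M12 = c (L - mu) t^2], and for [t >= 0] the value [u(t) + 1] is its largest
    eigenvalue [(M11 + M22)/2 + |((M11 - M22)/2, M12)|].
    Convexity: along a chord, a quadratic with leading coefficient [a] lies below
    its secant by exactly [a l (1 - l) (x - y)^2], while by the triangle inequality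
    the norm of a vector of quadratics exceeds its secant by at most the norm of the
    leading coefficients times the same amount. Here the trace part has leading
    coefficient [k = (L^2 + mu^2 + 2c^2)/2], and
    [k^2 - ((L^2 - mu^2)/2)^2 - (c (L - mu))^2 = (L mu + c^2)^2 >= 0].
    Bounds: the largest eigenvalue of the positive semidefinite [M] is at least half
    its trace, hence [u >= -1]; and it is [< 1] as soon as [M22 < 1] and
    [det (I - M) = t^2 (2 mu - (mu L + c^2) t) (2 L - (mu L + c^2) t) > 0],
    which is exactly what [t] in the interval guarantees. *)

From Stdlib Require Import Reals Rgeom Lra Psatz.
Open Scope R_scope.

Definition norm2 (x y : R) : R := sqrt (x ^ 2 + y ^ 2).

Lemma norm2_ge0 x y : 0 <= norm2 x y.
Proof. apply sqrt_pos. Qed.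

Lemma norm2_triangle x1 y1 x2 y2 :
  norm2 (x1 + x2) (y1 + y2) <= norm2 x1 y1 + norm2 x2 y2.
Proof.
  pose proof (triangle (x1 + x2) (y1 + y2) 0 0 x2 y2) as h.
  unfold dist_euc, norm2 in *; rewrite !Rsqr_pow2 in h.
  replace (x1 + x2 - x2) with x1 in h by ring; replace (y1 + y2 - y2) with y1 in h by ring.
  rewrite !Rminus_0_r in h; lra.
Qed.

Lemma norm2_scal l x y : norm2 (l * x) (l * y) = Rabs l * norm2 x y.
Proof.
  unfold norm2.
  replace ((l * x) ^ 2 + (l * y) ^ 2) with (Rsqr l * (x ^ 2 + y ^ 2))
    by (unfold Rsqr; ring).
  rewrite sqrt_mult_alt, sqrt_Rsqr_abs by apply Rle_0_sqr; reflexivity.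
Qed.

Lemma norm2_le x y k : 0 <= k -> x ^ 2 + y ^ 2 <= k ^ 2 -> norm2 x y <= k.
Proof.
  intros hk hxy; rewrite <- (sqrt_pow2 k hk); apply sqrt_le_1_alt, hxy.
Qed.

Lemma norm2_lt x y k : 0 <= k -> x ^ 2 + y ^ 2 < k ^ 2 -> norm2 x y < k.
Proof.
  intros hk hxy; rewrite <- (sqrt_pow2 k hk); apply sqrt_lt_1_alt; nra.
Qed.

Definition quad (a b c t : R) : R := a * t ^ 2 + b * t + c.

Lemma quad_convex_comb a b c x y l :
  quad a b c (l * x + (1 - l) * y) =
  l * quad a b c x + (1 - l) * quad a b c y - a * (l * (1 - l) * (x - y) ^ 2).
Proof. unfold quad; ring. Qed.

Lemma norm2_quad_convex_comb p2 p1 p0 q2 q1 q0 x y l :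
  0 <= l <= 1 ->
  norm2 (quad p2 p1 p0 (l * x + (1 - l) * y)) (quad q2 q1 q0 (l * x + (1 - l) * y))
  <= l * norm2 (quad p2 p1 p0 x) (quad q2 q1 q0 x)
     + (1 - l) * norm2 (quad p2 p1 p0 y) (quad q2 q1 q0 y)
     + l * (1 - l) * (x - y) ^ 2 * norm2 p2 q2.
Proof.
  intros hl.
  set (d := l * (1 - l) * (x - y) ^ 2).
  assert (hd : 0 <= d) by (unfold d; apply Rmult_le_pos; [nra | apply pow2_ge_0]).
  rewrite !quad_convex_comb; fold d.
  pose proof (norm2_triangle
            (l * quad p2 p1 p0 x + (1 - l) * quad p2 p1 p0 y)
            (l * quad q2 q1 q0 x + (1 - l) * quad q2 q1 q0 y) (- d * p2) (- d * q2)) as h1.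
  pose proof (norm2_triangle (l * quad p2 p1 p0 x) (l * quad q2 q1 q0 x)
                ((1 - l) * quad p2 p1 p0 y) ((1 - l) * quad q2 q1 q0 y)) as h2.
  rewrite norm2_scal, Rabs_Ropp, Rabs_pos_eq in h1 by lra.
  rewrite !norm2_scal, !Rabs_pos_eq in h2 by lra.
  replace (l * quad p2 p1 p0 x + (1 - l) * quad p2 p1 p0 y - p2 * d)
    with (l * quad p2 p1 p0 x + (1 - l) * quad p2 p1 p0 y + - d * p2) by ring.
  replace (l * quad q2 q1 q0 x + (1 - l) * quad q2 q1 q0 y - q2 * d)
    with (l * quad q2 q1 q0 x + (1 - l) * quad q2 q1 q0 y + - d * q2) by ring.
  lra.
Qed.

Lemma convex_on_quad_add_norm2 (I : R -> Prop) a b c p2 p1 p0 q2 q1 q0 :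
  norm2 p2 q2 <= a ->
  convex_on I (fun t => quad a b c t + norm2 (quad p2 p1 p0 t) (quad q2 q1 q0 t)).
Proof.
  intros ha x y l _ _ hl.
  assert (hd : 0 <= l * (1 - l) * (x - y) ^ 2)
    by (apply Rmult_le_pos; [nra | apply pow2_ge_0]).
  pose proof (norm2_quad_convex_comb p2 p1 p0 q2 q1 q0 x y l hl).
  rewrite quad_convex_comb.
  assert (l * (1 - l) * (x - y) ^ 2 * norm2 p2 q2 <= a * (l * (1 - l) * (x - y) ^ 2))
    by nra.
  lra.
Qed.

Definition lambda_max (a b m : R) : R := (a + b) / 2 + norm2 ((a - b) / 2) m.

Lemma lambda_max_ge_half_trace a b m : (a + b) / 2 <= lambda_max a b m.
Proof. unfold lambda_max; pose proof (norm2_ge0 ((a - b) / 2) m); lra. Qed.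

Lemma lambda_max_lt a b m s :
  b < s -> m ^ 2 < (s - a) * (s - b) -> lambda_max a b m < s.
Proof.
  intros hb hdet.
  assert (ha : a < s) by nra.
  unfold lambda_max.
  assert (norm2 ((a - b) / 2) m < s - (a + b) / 2) by (apply norm2_lt; nra).
  lra.
Qed.

Lemma norm2_leading_coef_le mu L c :
  norm2 ((L ^ 2 - mu ^ 2) / 2) (c * (L - mu)) <= / 2 * (L ^ 2 + mu ^ 2 + 2 * c ^ 2).
Proof.
  apply norm2_le; [nra |].
  assert ((/ 2 * (L ^ 2 + mu ^ 2 + 2 * c ^ 2)) ^ 2
          - (((L ^ 2 - mu ^ 2) / 2) ^ 2 + (c * (L - mu)) ^ 2) = (mu * L + c ^ 2) ^ 2)
    by field.
  pose proof (pow2_ge_0 (mu * L + c ^ 2)); lra.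
Qed.

Section Gram.

Variables mu L c : R.

Definition gram11 (t : R) : R := (1 - t * L) ^ 2 + c ^ 2 * t ^ 2.
Definition gram22 (t : R) : R := (1 - t * mu) ^ 2 + c ^ 2 * t ^ 2.
Definition gram12 (t : R) : R := c * (L - mu) * t ^ 2.

Lemma gram_det t :
  (1 - gram11 t) * (1 - gram22 t) - gram12 t ^ 2
  = t ^ 2 * ((2 * mu - (mu * L + c ^ 2) * t) * (2 * L - (mu * L + c ^ 2) * t)).
Proof. unfold gram11, gram22, gram12; ring. Qed.

Hypothesis hmu : 0 < mu.
Hypothesis hmuL : mu <= L.

Lemma u_fun_gram t :
  0 <= t -> u_fun mu L c t = lambda_max (gram11 t) (gram22 t) (gram12 t) - 1.
Proof.
  intros ht.
  assert (hs : 0 <= / 2 * (L - mu) * t) by (apply Rmult_le_pos; lra).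
  unfold u_fun, lambda_max, norm2, gram11, gram22, gram12.
  replace ((((1 - t * L) ^ 2 + c ^ 2 * t ^ 2 - ((1 - t * mu) ^ 2 + c ^ 2 * t ^ 2)) / 2) ^ 2
             + (c * (L - mu) * t ^ 2) ^ 2)
    with ((/ 2 * (L - mu) * t) ^ 2 * ((L * t + mu * t - 2) ^ 2 + 4 * c ^ 2 * t ^ 2))
    by field.
  rewrite sqrt_mult_alt, sqrt_pow2 by (try apply pow2_ge_0; exact hs).
  field.
Qed.

Lemma u_fun_quad t :
  0 <= t ->
  u_fun mu L c t =
  quad (/ 2 * (L ^ 2 + mu ^ 2 + 2 * c ^ 2)) (- (L + mu)) 0 t
  + norm2 (quad ((L ^ 2 - mu ^ 2) / 2) (- (L - mu)) 0 t) (quad (c * (L - mu)) 0 0 t).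
Proof.
  intros ht; rewrite u_fun_gram by exact ht; unfold lambda_max.
  replace ((gram11 t - gram22 t) / 2) with (quad ((L ^ 2 - mu ^ 2) / 2) (- (L - mu)) 0 t)
    by (unfold gram11, gram22, quad; field).
  replace (gram12 t) with (quad (c * (L - mu)) 0 0 t) by (unfold gram12, quad; ring).
  unfold gram11, gram22, quad; field.
Qed.

Lemma u_fun_convex : convex_on (I_int mu L c) (u_fun mu L c).
Proof.
  intros x y l hx hy hl.
  destruct hx as [hx _], hy as [hy _].
  rewrite !u_fun_quad by nra.
  apply (convex_on_quad_add_norm2 (fun _ => True)); auto.
  apply norm2_leading_coef_le.
Qed.

Lemma u_fun_bounds t : I_int mu L c t -> -1 <= u_fun mu L c t < 0.
Proof.
  intros [ht0 ht1].
  set (m := mu * L + c ^ 2) in ht1.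
  assert (hm : 0 < m) by (unfold m; nra).
  assert (htm : m * t < 2 * mu).
  { assert (2 * mu / m * m = 2 * mu) by (field; lra). nra. }
  rewrite u_fun_gram by lra.
  split.
  - assert (0 <= gram11 t /\ 0 <= gram22 t) as [h11 h22]
      by (unfold gram11, gram22; split; apply Rplus_le_le_0_compat;
          first [apply pow2_ge_0 | apply Rmult_le_pos; apply pow2_ge_0]).
    pose proof (lambda_max_ge_half_trace (gram11 t) (gram22 t) (gram12 t)).
    lra.
  - enough (lambda_max (gram11 t) (gram22 t) (gram12 t) < 1) by lra.
    apply lambda_max_lt.
    + assert (1 - gram22 t = t * (2 * mu - (mu ^ 2 + c ^ 2) * t))
        by (unfold gram22; ring).
      assert ((mu ^ 2 + c ^ 2) * t <= m * t).
      { apply Rmult_le_compat_r; [lra |]. unfold m; nra. }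
      nra.
    + pose proof (gram_det t) as hdet; fold m in hdet.
      assert (0 < t ^ 2 * ((2 * mu - m * t) * (2 * L - m * t))).
      { apply Rmult_lt_0_compat; [nra | apply Rmult_lt_0_compat; lra]. }
      lra.
Qed.

End Gram.

Theorem lemma2p1 (mu L c : R) (hmu : 0 < mu) (hmuL : mu <= L) (hc : 0 <= c) :
  convex_on (I_int mu L c) (u_fun mu L c) /\
  (forall t, I_int mu L c t -> -1 <= u_fun mu L c t < 0).
Proof.
  split.
  - exact (u_fun_convex mu L c hmuL).
  - exact (u_fun_bounds mu L c hmu hmuL).
Qed.
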